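(* Let $G$ be a connected Lie group with identity $e$ and consider a discrete-time linear control system on $G$ with control range $U\subset\mathbb{R}^m$ a compact neighborhood of $0$. Then for all $k,k_1,k_2\in\mathbb{N}$ and $g\in G$: (1) $\mathcal{R}_k=\mathcal{R}_{\le k}$; (2) if $k_1\le k_2$ then $\mathcal{R}_{k_1}\subset\mathcal{R}_{k_2}$; (3) $\mathcal{R}_k(g)=\mathcal{R}_k\, f_0^k(g)$; (4) $\mathcal{R}_{k_1+k_2}=\mathcal{R}_{k_1}f_0^{k_1}(\mathcal{R}_{k_2})=\mathcal{R}_{k_2}f_0^{k_2}(\mathcal{R}_{k_1})$; (5) for every control $u$, $\varphi(k,\mathcal{R}(g),u)\subset\mathcal{R}(g)$; (6) $e\in\mathrm{int}\,\mathcal{R}$ if and only if $\mathcal{R}$ is open.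
   Context: A discrete-time linear control system on $G$ is given by $f:G\times U\to G$, $f_u:=f(\cdot,u)$, such that $f_0$ is an automorphism of $G$ and $f_u(g)=f_u(e)\cdot f_0(g)$ for all $g\in G,u\in U$. Controls are $u=(u_i)_{i\in\mathbb{N}_0}\in U^{\mathbb{N}_0}$, solutions $\varphi(0,g,u)=g$, $\varphi(k,g,u)=f_{u_{k-1}}\circ\cdots\circ f_{u_0}(g)$. $\mathcal{R}_k(g)=\{\varphi(k,g,u):u\in U^{\mathbb{N}_0}\}$, $\mathcal{R}(g)=\bigcup_{k\in\mathbb{N}}\mathcal{R}_k(g)$, $\mathcal{R}_k=\mathcal{R}_k(e)$, $\mathcal{R}=\mathcal{R}(e)$, $\mathcal{R}_{\le k}=\bigcup_{t\le k}\mathcal{R}_t$. For sets $A,B\subset G$, $AB=\{ab:a\in A,b\in B\}$. *)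

From HB Require Import structures.
From mathcomp Require Import all_boot all_order all_algebra.
From mathcomp Require Import all_classical all_reals all_analysis.
Set Implicit Arguments. Unset Strict Implicit. Unset Printing Implicit Defensive.
Import Order.TTheory GRing.Theory Num.Theory.
Import numFieldNormedType.Exports.
Local Open Scope classical_set_scope.

Definition is_topgroup (G : topologicalType) (mul : G -> G -> G)
  (inv : G -> G) (e : G) : Prop :=
  [/\ (forall x y z, mul x (mul y z) = mul (mul x y) z),
      (forall x, mul e x = x /\ mul x e = x),
      (forall x, mul (inv x) x = e /\ mul x (inv x) = e),
      continuous (fun p : G * G => mul p.1 p.2) &
      continuous inv].

Definition is_automorphism (G : topologicalType) (mul : G -> G -> G)
  (phi : G -> G) : Prop :=
  [/\ (forall x y, phi (mul x y) = mul (phi x) (phi y)),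
      continuous phi &
      exists psi : G -> G, [/\ cancel phi psi, cancel psi phi & continuous psi]].

Definition linear_system (G : topologicalType) (mul : G -> G -> G) (e : G)
  (Ut : zmodType) (U : set Ut) (f : G -> Ut -> G) : Prop :=
  is_automorphism mul (fun g => f g 0%R) /\
  forall g u, U u -> f g u = mul (f e u) (f g 0%R).

Definition control (Ut : Type) (U : set Ut) (u : nat -> Ut) : Prop :=
  forall i, U (u i).

Fixpoint sol (G Ut : Type) (f : G -> Ut -> G) (k : nat) (g : G) (u : nat -> Ut) : G :=
  match k with
  | 0 => g
  | k'.+1 => f (sol f k' g u) (u k')
  end.

Definition reach_k (G Ut : Type) (U : set Ut) (f : G -> Ut -> G) (k : nat) (g : G) : set G :=
  [set sol f k g u | u in control U].

Definition reach (G Ut : Type) (U : set Ut) (f : G -> Ut -> G) (g : G) : set G :=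
  \bigcup_(k in [set k : nat | (0 < k)%N]) reach_k U f k g.

Definition reach_le (G Ut : Type) (U : set Ut) (f : G -> Ut -> G) (e : G) (k : nat) : set G :=
  \bigcup_(t in [set t : nat | (0 < t <= k)%N]) reach_k U f t e.

Definition setmul (G : Type) (mul : G -> G -> G) (A B : set G) : set G :=
  [set mul a b | a in A & b in B].

From HB Require Import structures.
From mathcomp Require Import all_boot all_order all_algebra.
From mathcomp Require Import all_classical all_reals all_analysis.
Import Order.TTheory GRing.Theory Num.Theory.
Import numFieldNormedType.Exports.
Local Open Scope classical_set_scope.
Set Implicit Arguments. Unset Strict Implicit.

(* Everything rests on the cocycle identity phi(k, g, u) = phi(k, e, u) f_0^k(g),
   obtained by induction from f_u(g) = f_u(e) f_0(g), and on concatenation of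
   controls.  Prepending k - t zero controls, which keep e fixed, embeds R_t in
   R_k; splitting a control of length k1 + k2 gives (4); concatenating with an
   arbitrary control gives (5).  For (6), a point x = phi(j, e, u) of R has the
   neighbourhood of points z with f_0^(-j)(x^-1 z) in int R, since phi(j, ., u)
   maps R into itself and sends f_0^(-j)(x^-1 z) back to z. *)

Section Controls.
Variables (G Ut : Type) (f : G -> Ut -> G).

Lemma eq_sol k g u v :
  (forall i, (i < k)%N -> u i = v i) -> sol f k g u = sol f k g v.
Proof.
elim: k => [//|k IHk] euv /=.
by rewrite euv // IHk // => i /ltnW; apply: euv.
Qed.

Lemma solD a b g u :
  sol f (a + b) g u = sol f a (sol f b g u) (fun i => u (i + b)%N).
Proof. by elim: a => [//|a IHa]; rewrite addSn /= IHa. Qed.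

Definition cat_control (b : nat) (w v : nat -> Ut) : nat -> Ut :=
  fun i => if (i < b)%N then w i else v (i - b)%N.

Lemma control_cat (U : set Ut) b w v :
  control U w -> control U v -> control U (cat_control b w v).
Proof. by move=> Uw Uv i; rewrite /cat_control; case: ifP. Qed.

Lemma sol_cat a b g w v :
  sol f (a + b) g (cat_control b w v) = sol f a (sol f b g w) v.
Proof.
rewrite solD (@eq_sol b g _ w) => [|i ib]; last by rewrite /cat_control ib.
by apply: eq_sol => i _; rewrite /cat_control ltnNge leq_addl addnK.
Qed.

Lemma reach_sol (U : set Ut) g k u y :
  control U u -> reach U f g y -> reach U f g (sol f k y u).
Proof.
move=> Uu [j /= j_gt0 [w Uw <-]].
exists (k + j)%N; first by rewrite /= addn_gt0 j_gt0 orbT.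
by exists (cat_control j w u); [apply: control_cat | rewrite sol_cat].
Qed.

End Controls.

Lemma iter_can (T : Type) (p q : T -> T) n :
  cancel q p -> cancel (iter n q) (iter n p).
Proof. by move=> qK; elim: n => [//|n IHn] y; rewrite iterSr /= qK IHn. Qed.

Lemma continuous_iter (T : topologicalType) (h : T -> T) n :
  continuous h -> continuous (iter n h).
Proof.
move=> hC; elim: n => [|n IHn] x; first exact: cvg_id.
exact: (continuous_comp (IHn x) (hC _)).
Qed.

Section LinearSystem.
Variables (G : topologicalType) (mul : G -> G -> G) (inv : G -> G) (e : G).
Variables (Ut : Type) (U : set Ut) (z0 : Ut) (f : G -> Ut -> G).
Hypothesis topgroupG : is_topgroup mul inv e.
Hypothesis f0_aut : is_automorphism mul (f^~ z0).
Hypothesis f_transl : forall g u, U u -> f g u = mul (f e u) (f g z0).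
Hypothesis Uz0 : U z0.

Let f0 := f^~ z0.

Lemma f0_e : f0 e = e.
Proof.
have [mulA mulid mulV _ _] := topgroupG.
have [f0M _ _] := f0_aut.
have f0ee : f0 e = mul (f0 e) (f0 e) by rewrite /f0 -f0M (proj1 (mulid e)).
have := congr1 (mul (inv (f0 e))) f0ee.
by rewrite mulA (proj1 (mulV _)) (proj1 (mulid _)).
Qed.

Lemma sol_e0 k : sol f k e (fun=> z0) = e.
Proof. by elim: k => [//|k IHk] /=; rewrite IHk; apply: f0_e. Qed.

Lemma reach_e : reach U f e e.
Proof. by exists 1%N => //; exists (fun=> z0); last exact: f0_e. Qed.

Lemma sol_transl k g u :
  control U u -> sol f k g u = mul (sol f k e u) (iter k f0 g).
Proof.
have [mulA mulid _ _ _] := topgroupG; have [f0M _ _] := f0_aut.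
move=> Uu; elim: k => [|k IHk] /=; first by rewrite (proj1 (mulid _)).
by rewrite f_transl // IHk /f0 f0M mulA -f_transl.
Qed.

Lemma reach_k_transl k g :
  reach_k U f k g = setmul mul (reach_k U f k e) [set iter k f0 g].
Proof.
apply/seteqP; split=> [x [u Uu <-]|x [y [u Uu <-] [z -> <-]]].
  by rewrite sol_transl //; exists (sol f k e u); [exists u | exists (iter k f0 g)].
by exists u => //; rewrite sol_transl.
Qed.

Lemma reach_k_mono t k : (t <= k)%N -> reach_k U f t e `<=` reach_k U f k e.
Proof.
move=> tk x [w Uw <-].
exists (cat_control (k - t) (fun=> z0) w); first exact: control_cat.
by rewrite -{1}(subnKC tk) sol_cat sol_e0.
Qed.

Lemma reach_le_reach_k k : (0 < k)%N -> reach_le U f e k = reach_k U f k e.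
Proof.
move=> k_gt0; apply/seteqP; split=> [x [t /= /andP[_ tk]]|x kx].
  exact: reach_k_mono.
by exists k => //=; rewrite k_gt0 leqnn.
Qed.

Lemma reach_kD a b :
  reach_k U f (a + b) e
  = setmul mul (reach_k U f a e) (iter a f0 @` reach_k U f b e).
Proof.
apply/seteqP; split=> [x [u Uu <-]|x [y [v Uv <-] [z [t [w Uw <-] <-] <-]]].
  have Uub : control U (fun i => u (i + b)%N) by move=> i.
  rewrite solD (sol_transl _ _ Uub).
  exists (sol f a e (fun i => u (i + b)%N)); first by exists (fun i => u (i + b)%N).
  by exists (iter a f0 (sol f b e u)) => //; exists (sol f b e u) => //; exists u.
exists (cat_control b w v); first exact: control_cat.
by rewrite sol_cat (sol_transl _ _ Uv).
Qed.

Lemma continuous_mull c : continuous (mul c).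
Proof.
have [_ _ _ mulC _] := topgroupG.
move=> z; apply: (continuous_comp (f := fun z => (c, z))
                    (g := fun p : G * G => mul p.1 p.2)); last exact: mulC.
by apply: cvg_pair; [exact: cvg_cst | exact: cvg_id].
Qed.

Lemma reach_open : interior (reach U f e) e <-> open (reach U f e).
Proof.
have [mulA mulid mulV _ _] := topgroupG.
have [_ _ [psi [f0K psiK psiC]]] := f0_aut.
split=> [e_int|]; last by rewrite openE; apply; apply: reach_e.
rewrite openE => y [j _ [u Uu <-]]; set x := sol f j e u.
pose h := iter j psi \o mul (inv x).
have psi_e : psi e = e by rewrite -{1}f0_e f0K.
have hx : h x = e.
  by rewrite /h /= (proj1 (mulV _)); elim: (j) => [//|i IHi]; rewrite /= IHi psi_e.
have hC : h @ x --> e.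
  by rewrite -hx; apply: continuous_comp; [apply: continuous_mull | apply: continuous_iter].
have x_nbhs : nbhs x (h @^-1` reach U f e) := hC _ e_int.
apply: filterS x_nbhs => z /= /(reach_sol j Uu).
by rewrite sol_transl // (iter_can j psiK) mulA (proj2 (mulV _)) (proj1 (mulid _)).
Qed.

End LinearSystem.

Theorem proposition2p12 (G : topologicalType) (mul : G -> G -> G) (inv : G -> G) (e : G)
  (R : realType) (m : nat) (U : set 'rV[R]_m) (f : G -> 'rV[R]_m -> G) :
  is_topgroup mul inv e -> hausdorff_space G -> connected [set: G] ->
  compact U -> nbhs (0%R : 'rV[R]_m) U ->
  linear_system mul e U f ->
  let f0 := fun g => f g 0%R in
  forall (k k1 k2 : nat) (g : G), (0 < k)%N -> (0 < k1)%N -> (0 < k2)%N ->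
  (reach_k U f k e = reach_le U f e k) /\
  [/\ ((k1 <= k2)%N -> reach_k U f k1 e `<=` reach_k U f k2 e),
      reach_k U f k g = setmul mul (reach_k U f k e) [set iter k f0 g],
      reach_k U f (k1 + k2) e
        = setmul mul (reach_k U f k1 e) (iter k1 f0 @` reach_k U f k2 e)
      /\ reach_k U f (k1 + k2) e
        = setmul mul (reach_k U f k2 e) (iter k2 f0 @` reach_k U f k1 e),
      (forall u : nat -> 'rV[R]_m, control U u ->
         (fun x => sol f k x u) @` reach U f g `<=` reach U f g) &
      (interior (reach U f e) e <-> open (reach U f e))].
Proof.
move=> topgroupG _ _ _ U_nbhs0 [f0_aut f_transl] f0 k k1 k2 g k_gt0 _ _.
have U0 : U 0%R := nbhs_singleton U_nbhs0.
split; first by rewrite (reach_le_reach_k topgroupG f0_aut U0 k_gt0).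
split.
- exact: (reach_k_mono topgroupG f0_aut U0).
- exact: (reach_k_transl topgroupG f0_aut f_transl).
- by split; [|rewrite (addnC k1 k2)]; apply: (reach_kD topgroupG f0_aut f_transl).
- by move=> u Uu y [x Rx <-]; apply: reach_sol.
- exact: (reach_open topgroupG f0_aut f_transl U0).
Qed.
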